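(* Let $n\ge1$ and let $\mathcal{S}$ be a discrete subgroup of $O(n+1)$ satisfying the spanning property. For any $\Omega\in\mathcal{K}_0(\mathcal{S})$ that is not a polytope, there exists an $\mathcal{S}$-invariant polytope $P\supset\Omega$ such that $\mathcal{F}_{-\infty}(\Omega)<\mathcal{F}_{-\infty}(P)$.
   Context: $\mathcal{K}_0(\mathcal{S})$: convex bodies in $\mathbb{R}^{n+1}$ containing the origin and invariant under all $\phi\in\mathcal{S}$. $\mathcal{F}_{-\infty}(\Omega)=V(\Omega)/(\min_{\mathbb{S}^n}h_\Omega)^{n+1}$, $h_\Omega$ the support function, $V(\Omega)=(n+1)|\Omega|$. Spanning property: for every $a\in\mathbb{S}^n$, $\mathrm{conv}\{\phi(a):\phi\in\mathcal{S}\}$ is a non-degenerate $(n+1)$-dimensional polytope. *)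

From HB Require Import structures.
From mathcomp Require Import all_boot all_order all_algebra.
From mathcomp Require Import all_classical all_reals all_analysis.
Set Implicit Arguments. Unset Strict Implicit. Unset Printing Implicit Defensive.
Import Order.TTheory GRing.Theory Num.Theory.
Import numFieldNormedType.Exports.
Local Open Scope classical_set_scope.
Local Open Scope ring_scope.

Section Defs.
Variables (R : realType) (d : nat).
Notation V := 'rV[R]_d.
Notation M := 'M[R]_d.

Definition dotp (x y : V) : R := \sum_(i < d) x 0 i * y 0 i.
Definition sphere : set V := [set u | dotp u u = 1].

(* action of a matrix phi on a point x (column convention: phi x) *)
Definition act (phi : M) (x : V) : V := x *m phi^T.

Definition orthogonal (phi : M) : Prop := phi *m phi^T = 1%:M.

Definition subgroup_O (S : set M) : Prop :=
  S `<=` orthogonal /\ S 1%:M /\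
  (forall f g, S f -> S g -> S (f *m g)) /\
  (forall f, S f -> S (invmx f)).

Definition discrete_set (S : set M) : Prop :=
  forall g, S g -> exists2 e : R, 0 < e &
    forall h, S h -> h <> g -> exists i j, e <= `|h i j - g i j|.

Definition conv (A : set V) : set V :=
  [set x | exists (k : nat) (p : 'I_k -> V) (l : 'I_k -> R),
     (forall i, A (p i)) /\ (forall i, 0 <= l i) /\ \sum_(i < k) l i = 1 /\
     x = \sum_(i < k) l i *: p i].

Definition polytope (P : set V) : Prop :=
  exists s : seq V, P = conv [set x | x \in s].

Definition convex_set (A : set V) : Prop :=
  forall x y t, A x -> A y -> 0 <= t <= 1 -> A ((1 - t) *: x + t *: y).

Definition convex_body (K : set V) : Prop :=
  convex_set K /\ compact K /\ interior K !=set0.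

Definition S_invariant (S : set M) (K : set V) : Prop :=
  forall phi, S phi -> act phi @` K = K.

Definition K0 (S : set M) (K : set V) : Prop :=
  convex_body K /\ K 0 /\ S_invariant S K.

Definition spanning (S : set M) : Prop :=
  forall a, sphere a ->
    let Q := conv [set act phi a | phi in S] in polytope Q /\ interior Q !=set0.

Definition supp_fun (K : set V) (u : V) : R := sup [set dotp x u | x in K].
Definition min_supp (K : set V) : R := inf [set supp_fun K u | u in sphere].

(* volume: Jordan (outer) content, infimum of total volumes of finite box covers;
   a box is given by corners lo <= hi, [lo_1,hi_1] x ... x [lo_d,hi_d] *)
Definition box (lo hi : V) : set V := [set x | forall i, lo 0 i <= x 0 i <= hi 0 i].
Definition box_vol (b : V * V) : R := \prod_(i < d) (b.2 0 i - b.1 0 i).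
Definition jordan_vol (K : set V) : R :=
  inf [set \sum_(b <- s) box_vol b | s in
        [set s : seq (V * V) | (forall b, b \in s -> forall i, b.1 0 i <= b.2 0 i) /\
             K `<=` \bigcup_(b in [set b | b \in s]) box b.1 b.2]].

Definition Vol (K : set V) : R := d%:R * jordan_vol K.
Definition F_minf (K : set V) : R := Vol K / (min_supp K) ^+ d.

End Defs.

(* Let [h] be the minimal support value of [Omega], attained in the direction
   [u0].  By invariance, every point of [Omega] satisfies [<x, phi u0> <= h] for
   all [phi] in [S].  The spanning property makes the orbit of [u0] finite (its
   points are extreme points of a polytope), with zero sum (the group fixes no
   nonzero vector, since the hull of a one-point orbit has empty interior) and
   hence not contained in any closed half-space.  So these finitely many
   half-spaces cut out a bounded [S]-invariant polytope [P] containing [Omega],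
   whose minimal support is still [h], attained at [u0].  As [Omega] is not a
   polytope, [P] contains a point outside the closed set [Omega], hence a box of
   positive Jordan content disjoint from [Omega]: the volume, and with it
   [F_minf], increases strictly. *)

From Pilot Require Import Defs.
From HB Require Import structures.
From mathcomp Require Import all_boot all_order all_algebra.
From mathcomp Require Import all_classical all_reals all_analysis.
From mathcomp Require Import ring lra.
Import Order.TTheory GRing.Theory Num.Theory.
Local Open Scope classical_set_scope.
Local Open Scope ring_scope.
Set Implicit Arguments. Unset Strict Implicit. Unset Printing Implicit Defensive.
Import numFieldNormedType.Exports.

Section RowVectors.
Variables (R : realType) (d : nat).
Implicit Types (x y z : 'rV[R]_d) (phi : 'M[R]_d).

Lemma dotp_mx x y : dotp x y = (x *m y^T) 0 0.
Proof. by rewrite /dotp !mxE; apply: eq_bigr => i _; rewrite !mxE. Qed.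

Lemma dotpC x y : dotp x y = dotp y x.
Proof. by apply: eq_bigr => i _; rewrite mulrC. Qed.

Lemma dotpDl x y z : dotp (x + y) z = dotp x z + dotp y z.
Proof. by rewrite /dotp -big_split; apply: eq_bigr => i _; rewrite !mxE mulrDl. Qed.

Lemma dotpZl a x z : dotp (a *: x) z = a * dotp x z.
Proof. by rewrite /dotp mulr_sumr; apply: eq_bigr => i _; rewrite !mxE mulrA. Qed.

Lemma dotpNl x z : dotp (- x) z = - dotp x z.
Proof. by rewrite -scaleN1r dotpZl mulN1r. Qed.

Lemma dotpBl x y z : dotp (x - y) z = dotp x z - dotp y z.
Proof. by rewrite dotpDl dotpNl. Qed.

Lemma dotp0l z : dotp 0 z = 0.
Proof. by rewrite -(scale0r 0) dotpZl mul0r. Qed.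

Lemma dotpDr x y z : dotp z (x + y) = dotp z x + dotp z y.
Proof. by rewrite dotpC dotpDl !(dotpC z). Qed.

Lemma dotpZr a x z : dotp z (a *: x) = a * dotp z x.
Proof. by rewrite dotpC dotpZl dotpC. Qed.

Lemma dotpNr x z : dotp z (- x) = - dotp z x.
Proof. by rewrite dotpC dotpNl dotpC. Qed.

Lemma dotpBr x y z : dotp z (x - y) = dotp z x - dotp z y.
Proof. by rewrite dotpDr dotpNr. Qed.

Lemma dotp0r z : dotp z 0 = 0.
Proof. by rewrite dotpC dotp0l. Qed.

Lemma dotp_suml (I : Type) (r : seq I) (P : pred I) (F : I -> 'rV[R]_d) z :
  dotp (\sum_(i <- r | P i) F i) z = \sum_(i <- r | P i) dotp (F i) z.
Proof.
elim/big_rec2: _ => [|i y s _ <-]; first exact: dotp0l.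
by rewrite dotpDl.
Qed.

Lemma dotp_sumr (I : Type) (r : seq I) (P : pred I) (F : I -> 'rV[R]_d) z :
  dotp z (\sum_(i <- r | P i) F i) = \sum_(i <- r | P i) dotp z (F i).
Proof. by rewrite dotpC dotp_suml; apply: eq_bigr => i _; rewrite dotpC. Qed.

Lemma dotp_ge0 x : 0 <= dotp x x.
Proof. by apply: sumr_ge0 => i _; rewrite -expr2 sqr_ge0. Qed.

Lemma dotp_eq0 x : (dotp x x == 0) = (x == 0).
Proof.
apply/idP/eqP => [|->]; last by rewrite dotp0l.
rewrite psumr_eq0 => [/allP x0|i _]; last by rewrite -expr2 sqr_ge0.
apply/rowP => i; have := x0 i; rewrite mem_index_enum mxE => /(_ isT) /=.
by rewrite mulf_eq0 orbb => /eqP.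
Qed.

Lemma dotp_gt0 x : (0 < dotp x x) = (x != 0).
Proof. by rewrite lt_def dotp_ge0 andbT dotp_eq0. Qed.

Lemma dotp_le_sqr_sum x y : 2 * dotp x y <= dotp x x + dotp y y.
Proof.
by have := dotp_ge0 (x - y); rewrite !(dotpBl, dotpBr) (dotpC y x); lra.
Qed.

Lemma normr_coord_le x i : `|x 0 i| <= `|x|.
Proof.
rewrite [leRHS]/Num.Def.normr /= mx_normrE.
exact: (le_trans _ (le_bigmax _ _ (0, i))).
Qed.

Lemma normr_le_coord x c : 0 <= c -> (forall i, `|x 0 i| <= c) -> `|x| <= c.
Proof.
move=> c0 xc; rewrite [leLHS]/Num.Def.normr /= mx_normrE.
by apply: bigmax_le => // [[i j]] _ /=; rewrite (ord1 i) xc.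
Qed.

Lemma dotp_norm_le x y : `|dotp x y| <= d%:R * (`|x| * `|y|).
Proof.
apply: (le_trans (ler_norm_sum _ _ _)).
rewrite mulr_natl -[in X in _ *+ X](card_ord d) -sumr_const; apply: ler_sum => i _.
by rewrite normrM ler_pM ?normr_coord_le.
Qed.

Lemma act_dotp phi x y : dotp (act phi x) y = dotp x (act phi^T y).
Proof. by rewrite !dotp_mx /act trmx_mul trmxK mulmxA. Qed.

Lemma act_mul phi psi x : act (phi *m psi) x = act phi (act psi x).
Proof. by rewrite /act trmx_mul mulmxA. Qed.

Lemma act1 x : act 1%:M x = x.
Proof. by rewrite /act trmx1 mulmx1. Qed.

Lemma actZ phi a x : act phi (a *: x) = a *: act phi x.
Proof. by rewrite /act scalemxAl. Qed.

Lemma act_sum phi (I : Type) (r : seq I) (P : pred I) (F : I -> 'rV[R]_d) :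
  act phi (\sum_(i <- r | P i) F i) = \sum_(i <- r | P i) act phi (F i).
Proof. by rewrite /act mulmx_suml. Qed.

Lemma act_trK phi x : Defs.orthogonal phi -> act phi^T (act phi x) = x.
Proof. by move=> /mulmx1C phiK; rewrite -act_mul phiK act1. Qed.

Lemma act_trKV phi x : Defs.orthogonal phi -> act phi (act phi^T x) = x.
Proof. by move=> phiK; rewrite -act_mul phiK act1. Qed.

Lemma orthogonal_dotp phi x y :
  Defs.orthogonal phi -> dotp (act phi x) (act phi y) = dotp x y.
Proof. by move=> phiK; rewrite act_dotp act_trK. Qed.

Lemma orthogonal_invmx phi : Defs.orthogonal phi -> invmx phi = phi^T.
Proof.
move=> phiK; have [phiU _] := mulmx1_unit phiK.
by rewrite -[RHS]mul1mx -(mulVmx phiU) -mulmxA phiK mulmx1.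
Qed.

End RowVectors.

Definition cat_fun (T : Type) (k1 k2 : nat) (f : 'I_k1 -> T) (g : 'I_k2 -> T)
    (i : 'I_(k1 + k2)) : T :=
  match fintype.split i with inl j => f j | inr j => g j end.

Lemma cat_fun_lshift T k1 k2 f g j : @cat_fun T k1 k2 f g (lshift k2 j) = f j.
Proof. by rewrite /cat_fun (unsplitK (inl _ j)). Qed.

Lemma cat_fun_rshift T k1 k2 f g j : @cat_fun T k1 k2 f g (rshift k1 j) = g j.
Proof. by rewrite /cat_fun (unsplitK (inr _ j)). Qed.

Section ConvexHull.
Variables (R : realType) (d : nat).
Local Notation V := 'rV[R]_d.
Local Notation conv := (@Defs.conv R d).
Implicit Types (A : set V) (x y : V).

Lemma conv_sub A : A `<=` conv A.
Proof.
move=> a Aa; exists 1%N, (fun _ => a), (fun _ => 1).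
by rewrite !big_ord1 scale1r; do !split=> //= _; apply: ler01.
Qed.

Lemma conv_mono A B : A `<=` B -> conv A `<=` conv B.
Proof. by move=> AB x [k [p [l [Ap lP]]]]; exists k, p, l; split=> // i; apply: AB. Qed.

Lemma conv_convex A : Defs.convex_set (conv A).
Proof.
move=> x y t [k1 [p1 [l1 [A1 [l1p [s1 ->]]]]]] [k2 [p2 [l2 [A2 [l2p [s2 ->]]]]]].
move=> /andP[t0 t1].
exists (k1 + k2)%N, (cat_fun p1 p2),
  (cat_fun (fun i => (1 - t) * l1 i) (fun i => t * l2 i)).
split; first by move=> i; rewrite /cat_fun; case: fintype.split.
split; first by move=> i; rewrite /cat_fun; case: fintype.split => j;
  rewrite mulr_ge0 ?subr_ge0.
rewrite !big_split_ord /=; split.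
  under eq_bigr do rewrite cat_fun_lshift.
  under [X in _ + X]eq_bigr do rewrite cat_fun_rshift.
  by rewrite -!mulr_sumr s1 s2 !mulr1 subrK.
rewrite !scaler_sumr; congr (_ + _); apply: eq_bigr => i _;
  by rewrite ?cat_fun_lshift ?cat_fun_rshift scalerA.
Qed.

Lemma conv_dotp_le A v c x :
  (forall a, A a -> dotp a v <= c) -> conv A x -> dotp x v <= c.
Proof.
move=> Ac [k [p [l [Ap [l0 [l1 ->]]]]]].
rewrite dotp_suml -[c]mul1r -l1 mulr_suml.
by apply: ler_sum => i _; rewrite dotpZl ler_wpM2l ?Ac.
Qed.

Lemma conv_dotp_ge A v c x :
  (forall a, A a -> c <= dotp a v) -> conv A x -> c <= dotp x v.
Proof.
move=> Ac Ax; rewrite -lerN2 -dotpNr.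
by apply: (conv_dotp_le _ Ax) => a Aa; rewrite dotpNr lerN2 Ac.
Qed.

Lemma conv_norm_le A c x : (forall a, A a -> `|a| <= c) -> conv A x -> `|x| <= c.
Proof.
move=> Ac [k [p [l [Ap [l0 [l1 ->]]]]]].
apply: (le_trans (ler_norm_sum _ _ _)); rewrite -[c]mul1r -l1 mulr_suml.
by apply: ler_sum => i _; rewrite normrZ ger0_norm // ler_wpM2l ?Ac.
Qed.

Lemma conv_dotp_le1 A x : (forall a, A a -> dotp a a <= 1) ->
  conv A x -> dotp x x <= 1.
Proof.
move=> A1 Ax; have Ax1 a : A a -> dotp a x <= 1.
  move=> Aa; rewrite dotpC; apply: (conv_dotp_le _ Ax) => b Ab.
  by have := dotp_le_sqr_sum b a; have := A1 a Aa; have := A1 b Ab; lra.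
exact: (conv_dotp_le _ Ax).
Qed.

(* A point of the unit sphere is an extreme point of the unit ball. *)
Lemma unit_mem_conv_seq (s : seq V) b : (forall p, p \in s -> dotp p p <= 1) ->
  dotp b b = 1 -> conv [set p | p \in s] b -> b \in s.
Proof.
move=> s1 b1 [k [p [l [ps [l0 [l1 bE]]]]]].
have pb1 i : dotp (p i) b <= 1.
  by have := dotp_le_sqr_sum (p i) b; have := s1 _ (ps i); lra.
have slack_ge0 i : 0 <= l i * (1 - dotp (p i) b) by rewrite mulr_ge0 ?subr_ge0.
have slack_sum : \sum_(i < k) l i * (1 - dotp (p i) b) = 0.
  under eq_bigr do rewrite mulrBr mulr1.
  rewrite sumrB l1 -b1 {1}bE dotp_suml; apply/eqP; rewrite subr_eq0; apply/eqP.
  by apply: eq_bigr => i _; rewrite dotpZl.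
have [i li] : exists i, 0 < l i.
  apply/not_existsP => l_le0; move/eqP: l1; rewrite big1 ?(eq_sym 0) ?oner_eq0 //.
  by move=> i _; apply/eqP; rewrite eq_le l0 andbT leNgt; apply/negP/l_le0.
have /eqP := psumr_eq0P (fun i _ => slack_ge0 i) slack_sum (isT : true) (i := i).
rewrite mulf_eq0 (gt_eqF li) subr_eq0 => /eqP pib.
suff -> : b = p i by apply: ps.
apply/eqP; rewrite -subr_eq0 -dotp_eq0 eq_le dotp_ge0 andbT.
by rewrite !(dotpBl, dotpBr) (dotpC b (p i)) -pib b1; have := s1 _ (ps i); lra.
Qed.

End ConvexHull.

Section Interior.
Variables (R : realType) (n : nat).
Local Notation V := 'rV[R]_n.+1.

Lemma interior_norm_ball (A : set V) z : interior A z ->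
  exists2 e : R, 0 < e & forall y, `|z - y| < e -> A y.
Proof.
by move=> /nbhs_ballP [e e0 zeA]; exists e => // y zy; apply: zeA; rewrite -ball_normE.
Qed.

Lemma interior_exists_neq (A : set V) z : interior A z -> exists2 y, A y & y != z.
Proof.
move=> /interior_norm_ball [e e0 zeA].
pose y := z + (e / 2) *: delta_mx 0 0.
have e2 : 0 < e / 2 by rewrite divr_gt0.
exists y.
  apply: zeA; rewrite opprD addrA subrr sub0r normrN normrZ gtr0_norm //.
  apply: (@le_lt_trans _ _ (e / 2 * 1)); last first.
    by rewrite mulr1 ltr_pdivrMr // ltr_pMr // ltr1n.
  apply: ler_wpM2l; first exact: ltW.
  apply: normr_le_coord => // i.
  by rewrite mxE; case: (_ && _); rewrite ?normr1 ?normr0.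
rewrite /y -subr_eq0 addrAC subrr add0r scaler_eq0 negb_or gt_eqF //=.
by apply/eqP => /matrixP/(_ 0 0)/eqP; rewrite !mxE eqxx oner_eq0.
Qed.

Lemma interior_dotp_neq0 (A : set V) z w : interior A z -> w != 0 ->
  exists2 y, A y & dotp y w != 0.
Proof.
move=> zI w0; have [e e0 zeA] := interior_norm_ball zI.
have Az : A z by apply: nbhs_singleton zI.
have [zw0|] := eqVneq (dotp z w) 0; last by exists z.
pose t := e / (2 * (`|w| + 1)).
have w1 : 0 < `|w| + 1 by rewrite ltr_pwDr.
have t0 : 0 < t by rewrite divr_gt0 // mulr_gt0.
exists (z + t *: w); last first.
  by rewrite dotpDl dotpZl zw0 add0r mulf_neq0 ?gt_eqF // dotp_gt0.
apply: zeA; rewrite opprD addrA subrr sub0r normrN normrZ gtr0_norm //.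
apply: (@le_lt_trans _ _ (t * (`|w| + 1))); first by rewrite ler_pM2l // lerDl.
have -> : t * (`|w| + 1) = e / 2 by rewrite /t; field; rewrite gt_eqF.
by rewrite ltr_pdivrMr // ltr_pMr // ltr1n.
Qed.

End Interior.

Section SpanningOrbits.
Variables (R : realType) (n : nat) (S : set 'M[R]_n.+1).
Hypotheses (HS : subgroup_O S) (Hspan : spanning S).
Local Notation V := 'rV[R]_n.+1.
Local Notation conv := (@Defs.conv R n.+1).

Definition group_orbit (a : V) : set V := [set act phi a | phi in S].

Lemma S_orthogonal phi : S phi -> Defs.orthogonal phi.
Proof. by case: HS => SO _ /SO. Qed.

Lemma S_tr phi : S phi -> S phi^T.
Proof.
move=> Sphi; rewrite -orthogonal_invmx; last exact: S_orthogonal.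
by case: HS => _ [_ [_ SV]]; apply: SV.
Qed.

Lemma orbit_act a phi v : S phi -> group_orbit a v -> group_orbit a (act phi v).
Proof.
case: HS => _ [_ [SM _]] Sphi [psi Spsi <-].
by exists (phi *m psi); [exact: SM | rewrite act_mul].
Qed.

Lemma orbit_refl a : group_orbit a a.
Proof. by case: HS => _ [S1 _]; exists 1%:M; last exact: act1. Qed.

Lemma orbit_sphere a v : Defs.sphere a -> group_orbit a v -> Defs.sphere v.
Proof.
move=> + [phi Sphi <-]; rewrite /Defs.sphere /= orthogonal_dotp //.
exact: S_orthogonal.
Qed.

(* The orbit of a fixed unit vector is a point, whose hull has empty interior. *)
Lemma fixed_point_eq0 (c : V) : (forall phi, S phi -> act phi c = c) -> c = 0.
Proof.
move=> cS; apply/eqP/negPn/negP => c0.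
pose a := (Num.sqrt (dotp c c))^-1 *: c.
have cc0 : 0 < dotp c c by rewrite dotp_gt0.
have a1 : Defs.sphere a.
  rewrite /Defs.sphere /= /a dotpZl dotpZr mulrA -expr2 exprVn sqr_sqrtr ?ltW //.
  by rewrite mulVf ?gt_eqF.
have hull_a : conv (group_orbit a) `<=` [set a].
  move=> _ [k [p [l [ap [_ [l1 ->]]]]]].
  have -> : \sum_(i < k) l i *: p i = \sum_(i < k) l i *: a.
    by apply: eq_bigr => i _; have [phi Sphi <-] := ap i; rewrite /a actZ cS.
  by rewrite -scaler_suml l1 scale1r.
have [_ [z zI]] := Hspan a1.
have [y /hull_a ->] := interior_exists_neq zI.
by rewrite (hull_a z (nbhs_singleton zI)) eqxx.
Qed.

Lemma orbit_finite a : Defs.sphere a ->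
  exists os : seq V, uniq os /\ group_orbit a = [set x | x \in os].
Proof.
move=> a1; have [[s sE] _] := Hspan a1.
exists (undup [seq x <- s | `[< group_orbit a x >]]); split; first exact: undup_uniq.
apply/seteqP; split => x /=; last by rewrite mem_undup mem_filter => /andP [/asboolP].
move=> ax; rewrite mem_undup mem_filter; apply/andP; split; first exact/asboolP.
apply: unit_mem_conv_seq; last by rewrite -sE; apply: conv_sub.
  move=> p ps; apply: (@conv_dotp_le1 _ _ (group_orbit a)); last first.
    by rewrite sE; apply: conv_sub.
  by move=> v /(orbit_sphere a1) ->.
exact: orbit_sphere a1 ax.
Qed.

Section FiniteOrbit.
Variables (a : V) (os : seq V).
Hypotheses (uos : uniq os) (osE : group_orbit a = [set x | x \in os]).

Lemma orbit_perm phi : S phi -> perm_eq (map (act phi) os) os.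
Proof.
move=> Sphi; have phiO := S_orthogonal Sphi.
have in_os v : group_orbit a v <-> v \in os by rewrite osE.
apply: uniq_perm => //.
  by rewrite map_inj_uniq // => x y /(congr1 (act phi^T)); rewrite !act_trK.
move=> v; apply/mapP/idP => [[x /in_os xos ->]|/in_os vos].
  exact/in_os/orbit_act.
exists (act phi^T v); last by rewrite act_trKV.
by apply/in_os/orbit_act => //; apply: S_tr.
Qed.

Lemma orbit_sum_eq0 : \sum_(v <- os) v = 0.
Proof.
apply: fixed_point_eq0 => phi Sphi.
by rewrite act_sum -[RHS](perm_big _ (orbit_perm Sphi)) big_map.
Qed.

End FiniteOrbit.

Lemma orbit_dotp_gt0 a w : Defs.sphere a -> w != 0 ->
  exists2 v, group_orbit a v & 0 < dotp w v.
Proof.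
move=> a1 w0; have [os [uos osE]] := orbit_finite a1.
apply: contrapT => no_pos.
have w_le0 v : v \in os -> dotp w v <= 0.
  by move=> vos; rewrite leNgt; apply/negP => wv; apply: no_pos; exists v; rewrite // osE.
have w_eq0 v : v \in os -> dotp w v = 0.
  have : \sum_(v <- os) - dotp w v = 0.
    by rewrite sumrN -dotp_sumr (orbit_sum_eq0 uos osE) dotp0r oppr0.
  rewrite big_seq_cond => /eqP; rewrite psumr_eq0 => [/allP all0 vos|u /andP[u_os _]].
    by have := all0 v vos; rewrite /= vos oppr_eq0 => /eqP.
  by rewrite oppr_ge0 w_le0.
have [_ [z zI]] := Hspan a1.
have [y hy] := interior_dotp_neq0 zI w0; apply/negP; rewrite negbK.
have orbit_w0 v : group_orbit a v -> dotp v w = 0 by rewrite osE dotpC => /w_eq0.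
apply/eqP/le_anti.
by rewrite (conv_dotp_le _ hy) ?(conv_dotp_ge _ hy) // => v /orbit_w0 ->.
Qed.

End SpanningOrbits.

Lemma count_lt_in (T : eqType) (a1 a2 : pred T) (s : seq T) :
  {in s, forall x, a1 x -> a2 x} -> (exists2 x, x \in s & a2 x && ~~ a1 x) ->
  (count a1 s < count a2 s)%N.
Proof.
move=> sub12 [x xs a2Da1].
have -> : count a2 s = (count (predI a1 a2) s + count (predI (predC a1) a2) s)%N.
  by rewrite -!count_filter count_predC size_filter.
rewrite (@eq_in_count _ _ a1) => [|y ys /=]; last first.
  by case a1y: (a1 y); rewrite //= (sub12 y ys a1y).
by rewrite -addn1 leq_add2l -has_count; apply/hasP; exists x; rewrite //= andbC.
Qed.

Lemma seq_argmin (T : eqType) (R : realType) (f : T -> R) (s : seq T) :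
  s != [::] -> exists2 x, x \in s & forall y, y \in s -> f x <= f y.
Proof.
elim: s => [//|y [|z s] IH] _.
  by exists y; rewrite ?mem_head // => y'; rewrite inE => /eqP ->.
have [x xs xmin] := IH isT.
have [fyx|fxy] := leP (f y) (f x).
  exists y; rewrite ?mem_head // => y'; rewrite inE => /orP[/eqP -> //|/xmin].
  exact: le_trans.
exists x; first by rewrite inE xs orbT.
by move=> y'; rewrite inE => /orP[/eqP ->|/xmin //]; apply: ltW.
Qed.

Section CircumscribedPolytope.
Variables (R : realType) (n : nat) (S : set 'M[R]_n.+1).
Hypotheses (HS : subgroup_O S) (Hspan : spanning S).
Local Notation V := 'rV[R]_n.+1.
Local Notation conv := (@Defs.conv R n.+1).
Variables (u : V) (os : seq V) (h : R).
Hypotheses (u1 : Defs.sphere u) (osE : group_orbit S u = [set x | x \in os]).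

Definition polyhedron : set V := [set x | forall v, v \in os -> dotp x v <= h].

Definition inactive (x : V) : nat := count (fun v => dotp x v != h) os.

Definition vertex (x : V) : Prop := polyhedron x /\
  forall w, (forall v, v \in os -> dotp x v = h -> dotp w v = 0) -> w = 0.

Lemma polyhedron_push x w : polyhedron x -> w != 0 ->
    (forall v, v \in os -> dotp x v = h -> dotp w v = 0) ->
  exists2 t, 0 < t & polyhedron (x + t *: w) /\ (inactive (x + t *: w) < inactive x)%N.
Proof.
move=> px w0 wx.
pose L := [seq v <- os | 0 < dotp w v].
have [v0 v0_orb v0_pos] := orbit_dotp_gt0 HS Hspan u1 w0.
have v0os : v0 \in os by move: v0_orb; rewrite osE.
have L0 : L != [::].
  apply/eqP => L0; move: (mem_filter (fun v => 0 < dotp w v) v0 os).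
  by rewrite -/L L0 v0_pos v0os.
have x_lt v : v \in os -> 0 < dotp w v -> dotp x v < h.
  move=> vos wv; rewrite lt_neqAle px // andbT; apply: contraTneq wv => xv.
  by rewrite wx // ltxx.
pose f v := (h - dotp x v) / dotp w v.
have [v1] := seq_argmin f L0; rewrite mem_filter => /andP[wv1 v1os] v1min.
have xv1 := x_lt v1 v1os wv1.
exists (f v1); first by rewrite divr_gt0 // subr_gt0.
split.
  move=> v vos; rewrite dotpDl dotpZl.
  have [wv|] := ltP 0 (dotp w v).
    have : f v1 * dotp w v <= h - dotp x v.
      apply: le_trans (_ : f v * dotp w v <= _); last by rewrite divfK ?gt_eqF.
      by rewrite ler_pM2r // v1min // mem_filter wv vos.
    lra.
  move=> wv; rewrite -lerBrDl (le_trans _ (_ : 0 <= h - dotp x v)) ?subr_ge0 ?px //.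
  by rewrite mulr_ge0_le0 // divr_ge0 ?subr_ge0 ?ltW.
apply: count_lt_in => [v vos|].
  by apply: contra => /eqP xv; rewrite dotpDl dotpZl wx // mulr0 addr0 xv.
exists v1 => //; rewrite (lt_eqF xv1) /= negbK dotpDl dotpZl /f divfK ?subrKC //.
by rewrite gt_eqF.
Qed.

(* Moving from a non-vertex in both directions of a vector orthogonal to the active
   constraints until a new constraint becomes active writes it as a convex
   combination of two points with fewer inactive constraints. *)
Lemma polyhedron_conv_vertex x : polyhedron x -> conv vertex x.
Proof.
have [k] := ubnP (inactive x); elim: k x => // k IH x /ltnSE lek px.
have [vx|nvx] := pselect (vertex x); first exact: conv_sub.
have [w [w0 wx]] : exists w, w != 0 /\
    (forall v, v \in os -> dotp x v = h -> dotp w v = 0).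
  apply: contrapT => no_w; apply: nvx; split => // w wx; apply/eqP.
  by apply: contrapT => /negP w0; apply: no_w; exists w.
have [t1 t1_gt0 [px1 lt1]] := polyhedron_push px w0 wx.
have nw0 : - w != 0 by rewrite oppr_eq0.
have nwx v : v \in os -> dotp x v = h -> dotp (- w) v = 0.
  by move=> vos xv; rewrite dotpNl wx // oppr0.
have [t2 t2_gt0 [px2 lt2]] := polyhedron_push px nw0 nwx.
have t12 : 0 < t1 + t2 by rewrite addr_gt0.
pose s := t1 / (t1 + t2).
have s01 : 0 <= s <= 1.
  by rewrite /s ler_pdivrMr // mul1r lerDl (ltW t2_gt0) divr_ge0 // ltW.
have -> : x = (1 - s) *: (x + t1 *: w) + s *: (x + t2 *: - w).
  rewrite !scalerDr !scalerA scalerN addrACA -scalerDl subrK scale1r -scalerBl.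
  have -> : (1 - s) * t1 - s * t2 = 0 by rewrite /s; field; rewrite gt_eqF.
  by rewrite scale0r addr0.
by apply: conv_convex s01; apply: IH; rewrite ?(leq_trans _ lek).
Qed.

Definition active_pattern (x : V) : (size os).-tuple bool :=
  map_tuple (fun v => dotp x v == h) (in_tuple os).

Lemma vertex_pattern_inj x y : vertex x -> vertex y ->
  active_pattern x = active_pattern y -> x = y.
Proof.
move=> [px vx] [py vy] /(congr1 val) /= xy.
have active_xy v : v \in os -> (dotp x v == h) = (dotp y v == h).
  move=> vos; have iv : (index v os < size os)%N by rewrite index_mem.
  rewrite -(nth_index 0 vos) -(nth_map 0 false (fun v => dotp x v == h) iv).
  by rewrite xy (nth_map 0 false _ iv).
apply/eqP; rewrite -subr_eq0; apply/eqP/vx => v vos xv.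
by move/eqP: (xv); rewrite active_xy // => /eqP yv; rewrite dotpBl xv yv subrr.
Qed.

(* A vertex is determined by its active constraints; patterns of no vertex
   contribute the default point [0], which is harmless as [0 <= h]. *)
Definition vertex_seq : seq V :=
  0 :: [seq xget 0 [set x | vertex x /\ active_pattern x = t]
          | t <- enum {: (size os).-tuple bool}].

Lemma vertex_mem_seq x : vertex x -> x \in vertex_seq.
Proof.
move=> vx; rewrite inE; apply/orP; right; apply/mapP; exists (active_pattern x).
  by rewrite mem_enum.
apply/esym/xget_unique => [//|y [vy]]; exact: vertex_pattern_inj.
Qed.

Hypothesis h_ge0 : 0 <= h.

Lemma vertex_seq_polyhedron x : x \in vertex_seq -> polyhedron x.
Proof.
have p0 : polyhedron 0 by move=> v _; rewrite dotp0l.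
rewrite inE => /orP[/eqP -> //|/mapP[t _ ->]].
by case: xgetP => // y -> [[]].
Qed.

Lemma polyhedronE : polyhedron = conv [set x | x \in vertex_seq].
Proof.
apply/seteqP; split => x.
  by move=> /polyhedron_conv_vertex; apply: conv_mono => y /vertex_mem_seq.
move=> hx v vos; apply: (conv_dotp_le _ hx) => y /vertex_seq_polyhedron.
exact.
Qed.

Lemma polyhedron_invariant : S_invariant S polyhedron.
Proof.
have in_os v : group_orbit S u v <-> v \in os by rewrite osE.
have act_os phi v : S phi -> v \in os -> act phi v \in os.
  by move=> Sphi /in_os vu; apply/in_os/orbit_act.
have act_poly phi x : S phi -> polyhedron x -> polyhedron (act phi x).
  by move=> Sphi px v vos; rewrite act_dotp px // act_os //; apply: S_tr.
move=> phi Sphi; apply/seteqP; split => [_ [x px <-]|x px]; first exact: act_poly.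
exists (act phi^T x); first by apply: act_poly; first exact: S_tr.
by rewrite act_trKV //; apply: (S_orthogonal HS).
Qed.

End CircumscribedPolytope.

Section SupportFunction.
Variables (R : realType) (d : nat).
Local Notation V := 'rV[R]_d.

Lemma lipschitz_continuous (f : V -> R) (C : R) :
  0 < C -> (forall x y, `|f x - f y| <= C * `|x - y|) -> continuous f.
Proof.
move=> C0 fC x; apply/(@cvgrPdist_lt _ _ _ (nbhs x)) => e e0; apply/nbhs_ballP.
exists (e / C) => [|y]; first exact: divr_gt0.
by rewrite -ball_normE /= => xy; rewrite (le_lt_trans (fC x y)) // -ltr_pdivlMl // mulrC.
Qed.

Lemma compact_norm_bounded (K : set V) : compact K ->
  exists2 M : R, 0 < M & forall x, K x -> `|x| <= M.
Proof.
move=> /compact_bounded [M [Mr KM]]; exists (`|M| + 1); first by rewrite ltr_pwDr.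
move=> x Kx; apply: (KM (`|M| + 1)) => //.
by rewrite (le_lt_trans (real_ler_norm Mr)) ?ltrDl.
Qed.

Variables (K : set V) (M : R).
Hypotheses (K0 : K !=set0) (KM : forall x, K x -> `|x| <= M).

Lemma supp_fun_has_sup u : has_sup [set dotp x u | x in K].
Proof.
split; first by case: K0 => x Kx; exists (dotp x u), x.
exists (d%:R * (M * `|u|)) => _ [x Kx <-].
apply: (le_trans (ler_norm _)); apply: (le_trans (dotp_norm_le _ _)).
by rewrite ler_wpM2l // ler_wpM2r // KM.
Qed.

Lemma supp_fun_ub u x : K x -> dotp x u <= supp_fun K u.
Proof. by move=> Kx; apply: sup_upper_bound; [exact: supp_fun_has_sup | exists x]. Qed.

Lemma supp_fun_le u c : (forall x, K x -> dotp x u <= c) -> supp_fun K u <= c.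
Proof.
move=> Kc; apply: ge_sup; first by case: K0 => x Kx; exists (dotp x u), x.
by move=> _ [x Kx <-]; apply: Kc.
Qed.

Lemma supp_fun_lipschitz u u' : `|supp_fun K u - supp_fun K u'| <= d%:R * M * `|u - u'|.
Proof.
have supp_le a b : supp_fun K a <= supp_fun K b + d%:R * M * `|a - b|.
  apply: supp_fun_le => x Kx.
  rewrite -[dotp x a](subrKC (dotp x b)) -dotpBr lerD ?supp_fun_ub //.
  apply: (le_trans (ler_norm _)); apply: (le_trans (dotp_norm_le _ _)).
  by rewrite -mulrA ler_wpM2l // ler_wpM2r // KM.
rewrite ler_norml; have := supp_le u u'; have := supp_le u' u.
by rewrite -normrN opprB; lra.
Qed.

Lemma supp_fun_continuous : continuous (supp_fun K).
Proof.
have M0 : 0 <= M by case: K0 => x Kx; apply: le_trans (KM Kx).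
apply: (@lipschitz_continuous _ (d%:R * M + 1)); first by rewrite ltr_pwDr // mulr_ge0.
by move=> x y; rewrite (le_trans (supp_fun_lipschitz x y)) // ler_wpM2r // lerDl.
Qed.

End SupportFunction.

Section MinimalSupport.
Variables (R : realType) (n : nat).
Local Notation V := 'rV[R]_n.+1.

Lemma sphere_compact : compact (@Defs.sphere R n.+1).
Proof.
apply: bounded_closed_compact.
  exists 1; split => // M M1 x /= x1; apply: normr_le_coord => [|i].
    exact: ltW (lt_trans _ M1).
  apply: ltW; apply: le_lt_trans M1.
  rewrite -(@ler_pXn2r _ 2) ?nnegrE // expr1n real_normK ?num_real // -x1.
  by rewrite /dotp (bigD1 i) //= -expr2 lerDl sumr_ge0 // => j _; rewrite -expr2 sqr_ge0.
have -> : @Defs.sphere R n.+1 = (fun x => dotp x x) @^-1` [set x | x = 1] by [].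
apply: preimage_closed; last exact: closed_eq.
move=> x _; rewrite /dotp.
apply: (@continuous_big _ _ +%R 0 xpredT) => [|i _]; first exact: add_continuous.
by move=> y; apply: continuousM; apply: coord_continuous.
Qed.

Lemma sphere_delta : Defs.sphere (delta_mx 0 0 : V).
Proof.
rewrite /Defs.sphere /= /dotp (bigD1 0) //= big1 => [|i /negPf i0].
  by rewrite !mxE eqxx mulr1 addr0.
by rewrite !mxE i0 mulr0.
Qed.

Lemma supp_fun_min_attained (K : set V) : compact K -> K !=set0 ->
  exists2 u0, Defs.sphere u0 & forall u, Defs.sphere u -> supp_fun K u0 <= supp_fun K u.
Proof.
move=> Kc K0; have [M M0 KM] := compact_norm_bounded Kc.
have [u0 u0S u0min] := @EVT_min_rV R n.+1 (supp_fun K) _ (ex_intro _ _ sphere_delta)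
  sphere_compact (continuous_subspaceT (supp_fun_continuous K0 KM)).
exists u0; first by move: u0S; rewrite inE.
by move=> u uS; apply: u0min; rewrite inE.
Qed.

Lemma min_suppE (K : set V) u0 : Defs.sphere u0 ->
    (forall u, Defs.sphere u -> supp_fun K u0 <= supp_fun K u) ->
  min_supp K = supp_fun K u0.
Proof.
move=> u0S u0min; apply/le_anti/andP; split.
  by apply: ge_inf; [exists (supp_fun K u0) => _ [u uS <-]; apply: u0min | exists u0].
by apply: lb_le_inf; [exists (supp_fun K u0), u0 | move=> _ [u uS <-]; apply: u0min].
Qed.

End MinimalSupport.

Section MinMax.
Variable R : realDomainType.
Implicit Types x y : R.

Lemma maxr_cases x y :
  [/\ x <= Num.max x y, y <= Num.max x y & Num.max x y = x \/ Num.max x y = y].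
Proof.
by rewrite maxEle; case: (leP x y) => xy; split; rewrite ?lexx ?(ltW xy) //; [right | left].
Qed.

Lemma minr_cases x y :
  [/\ Num.min x y <= x, Num.min x y <= y & Num.min x y = x \/ Num.min x y = y].
Proof.
by rewrite minEle; case: (leP x y) => xy; split; rewrite ?lexx ?(ltW xy) //; [left | right].
Qed.

Lemma clip_between (a b l r y : R) : a <= y <= b -> l <= y <= r ->
  Num.max a l <= y <= Num.max (Num.max a l) (Num.min b r).
Proof.
move=> /andP[ay yb] /andP[ly yr].
have [c1 c2 c3] := maxr_cases a l; have [d1 d2 d3] := minr_cases b r.
have [e1 e2 e3] := maxr_cases (Num.max a l) (Num.min b r).
by apply/andP; split; [case: c3 => ->; lra | case: d3 => dE; lra].
Qed.

Lemma interval_len_split (lo hi l r : R) : lo <= hi -> l <= r ->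
  hi - lo = (Num.max (Num.max lo l) (Num.min hi r) - Num.max lo l)
          + (Num.max lo (Num.min hi l) - lo) + (hi - Num.min hi (Num.max lo r)).
Proof.
move=> lohi lr.
have [a1 a2 a3] := maxr_cases lo l; set A := Num.max lo l in a1 a2 a3 *.
have [b1 b2 b3] := minr_cases hi r; set B := Num.min hi r in b1 b2 b3 *.
have [c1 c2 c3] := maxr_cases A B; set C := Num.max A B in c1 c2 c3 *.
have [e1 e2 e3] := minr_cases hi l; set E := Num.min hi l in e1 e2 e3 *.
have [f1 f2 f3] := maxr_cases lo E; set F := Num.max lo E in f1 f2 f3 *.
have [g1 g2 g3] := maxr_cases lo r; set G := Num.max lo r in g1 g2 g3 *.
have [k1 k2 k3] := minr_cases hi G; set K := Num.min hi G in k1 k2 k3 *.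
by case: a3; case: b3; case: c3; case: e3; case: f3; case: g3; case: k3; lra.
Qed.

End MinMax.

Section ProdTelescope.
Variables (R : comPzRingType) (d : nat) (C L : 'I_d -> R).

Definition prod_mixed (i : nat) (x : R) : R :=
  \prod_(j < d) (if (j < i)%N then C j else if j == i :> nat then x else L j).

Lemma prod_mixedE (i : 'I_d) x :
  prod_mixed i x = x * \prod_(j < d | j != i) (if (j < i)%N then C j else L j).
Proof.
rewrite /prod_mixed (bigD1 i) //= ltnn eqxx; congr (_ * _).
apply: eq_bigr => j ji; case: ifP => // _; case: eqP => // /val_inj ji_eq.
by rewrite ji_eq eqxx in ji.
Qed.

Lemma prodrB_telescope :
  \prod_j L j - \prod_j C j = \sum_(i < d) prod_mixed i (L i - C i).
Proof.
pose T k := \prod_(j < d) (if (j < k)%N then C j else L j).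
have T0 : T 0%N = \prod_j L j by [].
have Td : T d = \prod_j C j by apply: eq_bigr => j _; rewrite ltn_ord.
have TB (i : 'I_d) : T i - T i.+1 = prod_mixed i (L i - C i).
  rewrite prod_mixedE mulrBl -!prod_mixedE; congr (_ - _); apply: eq_bigr => j _.
    by case: ifP => // _; case: eqP => // /val_inj ->.
  rewrite ltnS leq_eqVlt; case: (ltnP j i) => ij; first by rewrite orbT.
  by rewrite orbF; case: eqP => // /val_inj ->.
under [RHS]eq_bigr do rewrite -TB.
rewrite -T0 -Td -(big_mkord xpredT (fun k => T k - T k.+1)) -opprB -telescope_sumr //.
by rewrite -sumrN; apply: eq_bigr => k _; rewrite opprB.
Qed.

End ProdTelescope.

Section JordanContent.
Variables (R : realType) (d : nat).
Local Notation V := 'rV[R]_d.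
Local Notation box := (@Defs.box R d).
Implicit Types (s : seq (V * V)) (K : set V).

Definition boxes_valid s := forall b, b \in s -> forall i, b.1 0 i <= b.2 0 i.
Definition boxes_cover s K := K `<=` \bigcup_(b in [set b | b \in s]) box b.1 b.2.
Definition boxes_vol s := \sum_(b <- s) box_vol b.

Lemma boxes_vol_ge0 s : boxes_valid s -> 0 <= boxes_vol s.
Proof.
move=> sv; rewrite /boxes_vol big_seq sumr_ge0 // => b bs.
by apply: prodr_ge0 => i _; rewrite subr_ge0 sv.
Qed.

Lemma jordan_vol_le K s : boxes_valid s -> boxes_cover s K -> jordan_vol K <= boxes_vol s.
Proof.
move=> sv sK; apply: ge_inf; last by exists s.
by exists 0 => _ [t [tv tK] <-]; exact: boxes_vol_ge0.
Qed.

Lemma jordan_vol_ge K c : (exists s, boxes_valid s /\ boxes_cover s K) ->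
  (forall s, boxes_valid s -> boxes_cover s K -> c <= boxes_vol s) -> c <= jordan_vol K.
Proof.
move=> [s [sv sK]] cs; apply: lb_le_inf; first by exists (boxes_vol s), s.
by move=> _ [t [tv tK] <-]; apply: cs.
Qed.

Lemma norm_bounded_cover K c : 0 <= c -> (forall x, K x -> `|x| <= c) ->
  exists s, boxes_valid s /\ boxes_cover s K.
Proof.
move=> c0 Kc; exists [:: (- c *: const_mx 1, c *: const_mx 1)]; split.
  by move=> b; rewrite inE => /eqP -> i /=; rewrite !mxE !mulr1; lra.
move=> x Kx; exists (- c *: const_mx 1, c *: const_mx 1); first by rewrite /= inE.
move=> i /=; rewrite !mxE !mulr1 -ler_norml.
exact: le_trans (normr_coord_le _ _) (Kc x Kx).
Qed.

Variables l r : V.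
Hypothesis lr : forall i, l 0 i <= r 0 i.

(* A box [b] is cut into [box_clip b], its part inside [box l r], and 2 d pieces:
   [box_below b i] (resp. [box_above b i]) clips the coordinates [j < i] to
   [[l j, r j]] and keeps only the part of coordinate [i] below [l i]
   (resp. above [r i]). *)
Definition clip_lo (b : V * V) j := Num.max (b.1 0 j) (l 0 j).
Definition clip_hi (b : V * V) j := Num.max (clip_lo b j) (Num.min (b.2 0 j) (r 0 j)).
Definition below_hi (b : V * V) j := Num.max (b.1 0 j) (Num.min (b.2 0 j) (l 0 j)).
Definition above_lo (b : V * V) j := Num.min (b.2 0 j) (Num.max (b.1 0 j) (r 0 j)).

Definition box_clip (b : V * V) : V * V := (\row_j clip_lo b j, \row_j clip_hi b j).

Definition box_below (b : V * V) (i : 'I_d) : V * V :=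
  (\row_j (if (j < i)%N then clip_lo b j else b.1 0 j),
   \row_j (if (j < i)%N then clip_hi b j else if j == i :> nat then below_hi b j
           else b.2 0 j)).

Definition box_above (b : V * V) (i : 'I_d) : V * V :=
  (\row_j (if (j < i)%N then clip_lo b j else if j == i :> nat then above_lo b j
           else b.1 0 j),
   \row_j (if (j < i)%N then clip_hi b j else b.2 0 j)).

Definition box_pieces (b : V * V) : seq (V * V) :=
  [seq box_below b i | i <- index_enum 'I_d] ++ [seq box_above b i | i <- index_enum 'I_d].

Lemma box_vol_split (b : V * V) : (forall i, b.1 0 i <= b.2 0 i) ->
  box_vol b = box_vol (box_clip b) + boxes_vol (box_pieces b).
Proof.
move=> bv; pose C j := clip_hi b j - clip_lo b j; pose L j := b.2 0 j - b.1 0 j.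
have clipE : box_vol (box_clip b) = \prod_j C j by apply: eq_bigr => j _; rewrite !mxE.
have belowE i : box_vol (box_below b i) = prod_mixed C L i (below_hi b i - b.1 0 i).
  by apply: eq_bigr => j _; rewrite !mxE; case: ifP => // _; case: eqP => // /val_inj ->.
have aboveE i : box_vol (box_above b i) = prod_mixed C L i (b.2 0 i - above_lo b i).
  by apply: eq_bigr => j _; rewrite !mxE; case: ifP => // _; case: eqP => // /val_inj ->.
rewrite /boxes_vol /box_pieces big_cat /= !big_map.
under eq_bigr do rewrite belowE.
under [X in _ + (_ + X)]eq_bigr do rewrite aboveE.
rewrite -big_split /= clipE; apply/eqP.
rewrite addrC -subr_eq -[box_vol b]/(\prod_j L j) prodrB_telescope.
apply/eqP; apply: eq_bigr => i _; rewrite !prod_mixedE -mulrDl; congr (_ * _).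
rewrite /C /L (interval_len_split (bv i) (lr i)).
by rewrite /clip_hi /clip_lo /below_hi /above_lo; lra.
Qed.

Lemma clip_lo_le_hi (b : V * V) i : clip_lo b i <= clip_hi b i.
Proof. by case: (maxr_cases (clip_lo b i) (Num.min (b.2 0 i) (r 0 i))). Qed.

Lemma box_pieces_valid (b : V * V) : (forall i, b.1 0 i <= b.2 0 i) ->
  boxes_valid (box_pieces b).
Proof.
move=> bv p; rewrite mem_cat => /orP[] /mapP[k _ ->] j /=; rewrite !mxE.
  case: ifP => _; first exact: clip_lo_le_hi.
  by case: ifP => _ //; case: (maxr_cases (b.1 0 j) (Num.min (b.2 0 j) (l 0 j))).
case: ifP => _; first exact: clip_lo_le_hi.
by case: ifP => _ //; case: (minr_cases (b.2 0 j) (Num.max (b.1 0 j) (r 0 j))).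
Qed.

Lemma box_clip_cover (b : V * V) y :
  box b.1 b.2 y -> box l r y -> box (box_clip b).1 (box_clip b).2 y.
Proof. by move=> yb ylr i; rewrite !mxE clip_between. Qed.

Lemma box_pieces_cover (b : V * V) y : box b.1 b.2 y -> ~ box l r y ->
  exists2 p, p \in box_pieces b & box p.1 p.2 y.
Proof.
move=> yb ylr.
pose out k := [exists i : 'I_d, (i == k :> nat) && ~~ (l 0 i <= y 0 i <= r 0 i)].
have ex_out : exists k, out k.
  apply: contrapT => no_out; apply: ylr => i; apply/negPn/negP => yi; apply: no_out.
  by exists i; apply/existsP; exists i; rewrite eqxx yi.
case: (ex_minnP ex_out) => m /existsP[i /andP[/eqP im yi] m_min].
have y_clip (j : 'I_d) : (j < i)%N -> clip_lo b j <= y 0 j <= clip_hi b j.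
  move=> ji; apply: clip_between; first exact: yb.
  apply/negPn/negP => yj; have /m_min : out j by apply/existsP; exists j; rewrite eqxx yj.
  by rewrite -im leqNgt ji.
have /andP[bi1 bi2] := yb i.
rewrite negb_and -!ltNge in yi; case/orP: yi => yi.
  exists (box_below b i); first by rewrite mem_cat map_f ?mem_index_enum.
  move=> j /=; rewrite !mxE; case: ifPn => ji; first exact: y_clip.
  case: eqP => [/val_inj ->|_]; last exact: yb.
  rewrite /below_hi bi1 /=.
  have [e1 e2 e3] := minr_cases (b.2 0 i) (l 0 i).
  by have [f1 f2 f3] := maxr_cases (b.1 0 i) (Num.min (b.2 0 i) (l 0 i)); case: e3; lra.
exists (box_above b i); first by rewrite mem_cat map_f ?mem_index_enum ?orbT.
move=> j /=; rewrite !mxE; case: ifPn => ji; first exact: y_clip.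
case: eqP => [/val_inj ->|_]; last exact: yb.
rewrite /above_lo bi2 andbT.
have [g1 g2 g3] := maxr_cases (b.1 0 i) (r 0 i).
by have [k1 k2 k3] := minr_cases (b.2 0 i) (Num.max (b.1 0 i) (r 0 i)); case: g3; lra.
Qed.

Lemma jordan_vol_excision (O P : set V) : O `<=` P -> box l r `<=` P ->
    (forall y, O y -> ~ box l r y) ->
    (exists s, boxes_valid s /\ boxes_cover s P) ->
    (exists s, boxes_valid s /\ boxes_cover s O) ->
  jordan_vol O + jordan_vol (box l r) <= jordan_vol P.
Proof.
move=> OP lrP O_lr Pcov Ocov; apply: jordan_vol_ge => // s sv sP.
pose s_out := flatten [seq box_pieces b | b <- s].
pose s_in := [seq box_clip b | b <- s].
have -> : boxes_vol s = boxes_vol s_out + boxes_vol s_in.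
  rewrite /boxes_vol big_flatten /= !big_map -big_split /= big_seq [RHS]big_seq.
  by apply: eq_bigr => b bs; rewrite addrC box_vol_split //; apply: sv.
apply: lerD; apply: jordan_vol_le.
- by move=> p /flattenP[q /mapP[b bs ->]]; apply: box_pieces_valid; apply: sv.
- move=> y Oy; have [b bs yb] := sP y (OP y Oy).
  have [p pb yp] := box_pieces_cover yb (O_lr y Oy).
  by exists p => //; apply/flattenP; exists (box_pieces b); rewrite ?map_f.
- by move=> p /mapP[b bs ->] i; rewrite !mxE clip_lo_le_hi.
- move=> y ylr; have [b bs yb] := sP y (lrP y ylr).
  by exists (box_clip b); [apply: map_f | apply: box_clip_cover].
Qed.

End JordanContent.

Section Counting.
Variable R : realType.

Lemma sum_nat_between_le (al be : R) (m : nat) : al <= be ->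
  \sum_(j < m) ((al <= j%:R) && (j%:R <= be))%:R <= be - al + 1.
Proof.
move=> albe; pose cnt m : R := \sum_(j < m) ((al <= j%:R) && (j%:R <= be))%:R.
suff /(_ m)[] : forall m, cnt m <= Num.max 0 (m%:R - al) /\ cnt m <= be - al + 1 by [].
elim=> [|k [IH1 IH2]].
  by rewrite /cnt big_ord0; case: (maxr_cases 0 (0%:R - al)) => ? _ _; split; lra.
rewrite /cnt big_ord_recr /= -/(cnt k) -natr1.
have [a1 a2 a3] := maxr_cases 0 (k%:R - al).
have [b1 b2 b3] := maxr_cases 0 (k%:R + 1 - al).
have k0 : 0 <= k%:R :> R by [].
case: andP => [[alk kbe]|_]; rewrite ?mulr1n ?addr0; split; case: a3; lra.
Qed.

Lemma prod_addr_le (I : Type) (r : seq I) (a : I -> R) (e : R) :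
    0 <= e <= 1 -> (forall i, 0 <= a i) ->
  \prod_(i <- r) (a i + e) <=
    \prod_(i <- r) a i + e * (size r)%:R * \prod_(i <- r) (a i + 1).
Proof.
move=> /andP[e0 e1] a0; elim: r => [|x r IH]; first by rewrite !big_nil mulr0 mul0r addr0.
rewrite !big_cons /= -natr1.
set P := \prod_(i <- r) (a i + e) in IH *.
set A := \prod_(i <- r) a i in IH *.
set U := \prod_(i <- r) (a i + 1) in IH *.
set k := (size r)%:R in IH *.
have A0 : 0 <= A by apply: prodr_ge0 => i _.
have AU : A <= U by apply: ler_prod => i _; rewrite a0 /= lerDl.
have k0 : 0 <= k by [].
have ax := a0 x.
have h1 : (a x + e) * P <= (a x + e) * (A + e * k * U) by rewrite ler_wpM2l ?addr_ge0.
have h2 : e * A <= e * (U * (a x + 1)).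
  by rewrite ler_wpM2l // (le_trans AU) // ler_peMr ?lerDr // (le_trans A0).
have h3 : (a x + e) * (e * k * U) <= (a x + 1) * (e * k * U).
  by rewrite ler_wpM2r ?lerD2l // !mulr_ge0 // (le_trans A0).
apply: (le_trans h1).
have -> : (a x + e) * (A + e * k * U) = a x * A + e * A + (a x + e) * (e * k * U) by ring.
have -> : e * (k + 1) * ((a x + 1) * U) = e * (U * (a x + 1)) + (a x + 1) * (e * k * U).
  by ring.
lra.
Qed.

Lemma ler_sum_mem (T : eqType) (s : seq T) (F : T -> R) x :
  x \in s -> (forall y, y \in s -> 0 <= F y) -> F x <= \sum_(y <- s) F y.
Proof.
elim: s => [//|y s IH]; rewrite inE big_cons => /orP[/eqP ->|xs] F0.
  by rewrite lerDl big_seq sumr_ge0 // => z zs; rewrite F0 // inE zs orbT.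
rewrite (le_trans (IH xs _)) ?lerDr ?F0 ?mem_head // => z zs.
by rewrite F0 // inE zs orbT.
Qed.

End Counting.

Section BoxContent.
Variables (R : realType) (d : nat).
Local Notation V := 'rV[R]_d.
Local Notation box := (@Defs.box R d).
Variables l r : V.
Hypothesis lr : forall i, l 0 i < r 0 i.

Let side i := r 0 i - l 0 i.
Let side_gt0 i : 0 < side i. Proof. by rewrite /side subr_gt0. Qed.
Let ratio (b : V * V) i := (b.2 0 i - b.1 0 i) / side i.

Section Grid.
Variable N : nat.
Hypothesis N_gt0 : (0 < N)%N.

Let N0 : 0 < N%:R :> R. Proof. by rewrite ltr0n. Qed.

Definition grid_coord i (j : 'I_N) : R := l 0 i + j%:R * side i / N%:R.

Definition grid_in (b : V * V) i (j : 'I_N) : R :=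
  ((b.1 0 i <= grid_coord i j) && (grid_coord i j <= b.2 0 i))%:R.

Lemma grid_in_ge0 (b : V * V) i j : 0 <= grid_in b i j.
Proof. by rewrite /grid_in; case: (_ && _). Qed.

Lemma grid_point_in_box (k : {ffun 'I_d -> 'I_N}) : box l r (\row_i grid_coord i (k i)).
Proof.
move=> i; rewrite mxE /grid_coord lerDl !(mulr_ge0, invr_ge0, ltW (side_gt0 i)) //=.
have : (k i)%:R * side i / N%:R <= side i.
  rewrite mulrAC -[leRHS]mul1r ler_wpM2r ?(ltW (side_gt0 i)) //.
  by rewrite ler_pdivrMr // mul1r ler_nat ltnW.
by rewrite /side; lra.
Qed.

Lemma grid_coord_count (b : V * V) i : b.1 0 i <= b.2 0 i ->
  \sum_(j < N) grid_in b i j <= N%:R * (ratio b i + N%:R^-1).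
Proof.
move=> bi; pose al := (b.1 0 i - l 0 i) * N%:R / side i.
pose be := (b.2 0 i - l 0 i) * N%:R / side i.
have in_between (j : 'I_N) : grid_in b i j <= ((al <= j%:R) && (j%:R <= be))%:R.
  have jE : j%:R = (grid_coord i j - l 0 i) * N%:R / side i.
    by rewrite /grid_coord addrC addKr; field; rewrite !gt_eqF.
  rewrite /grid_in; case: andP => [[b1j jb2]|]; last by case: (_ && _).
  by rewrite /al /be jE !ler_pM2r ?invr_gt0 // !lerD2r b1j jb2.
apply: (le_trans (ler_sum _ (fun j _ => in_between j))).
have albe : al <= be by rewrite /al /be !ler_pM2r ?invr_gt0 // lerD2r.
have -> : N%:R * (ratio b i + N%:R^-1) = be - al + 1.
  by rewrite /al /be /ratio; field; rewrite !gt_eqF.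
exact: sum_nat_between_le.
Qed.

(* Each of the [N ^ d] grid points is covered, and a box [b] contains at most
   [\prod_i (N * ratio b i + 1)] of them. *)
Lemma grid_count s : boxes_valid s -> boxes_cover s (box l r) ->
  1 <= \sum_(b <- s) \prod_(i < d) (ratio b i + N%:R^-1).
Proof.
move=> sv sc.
have grid_card : \sum_(k : {ffun 'I_d -> 'I_N}) (1 : R) = N%:R ^+ d.
  have -> : N%:R ^+ d = \prod_(i < d) \sum_(j < N) (1 : R).
    by rewrite sumr_const card_ord prodr_const card_ord.
  by rewrite bigA_distr_bigA /=; apply: eq_bigr => k _; apply/esym/big1.
have grid_covered : \sum_(k : {ffun 'I_d -> 'I_N}) (1 : R) <=
    \sum_(k : {ffun 'I_d -> 'I_N}) \sum_(b <- s) \prod_i grid_in b i (k i).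
  apply: ler_sum => k _; have [b bs kb] := sc _ (grid_point_in_box k).
  rewrite (le_trans _ (ler_sum_mem (F := fun b => \prod_i grid_in b i (k i)) bs _)) //.
    by rewrite big1 // => i _; have := kb i; rewrite mxE /grid_in => ->.
  by move=> b' _; apply: prodr_ge0 => i _; apply: grid_in_ge0.
have Nd0 := exprn_gt0 d N0; rewrite -(ler_pM2l Nd0) mulr1 mulr_sumr -grid_card.
apply: (le_trans grid_covered); rewrite exchange_big /= big_seq [leRHS]big_seq.
apply: ler_sum => b bs; rewrite -bigA_distr_bigA grid_card.
have -> : N%:R ^+ d * \prod_(i < d) (ratio b i + N%:R^-1) =
    \prod_(i < d) (N%:R * (ratio b i + N%:R^-1)).
  by rewrite big_split /= prodr_const card_ord.
apply: ler_prod => i _.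
by rewrite sumr_ge0 ?grid_coord_count ?sv //= => j _; apply: grid_in_ge0.
Qed.

End Grid.

Lemma boxes_vol_box_ge s : boxes_valid s -> boxes_cover s (box l r) ->
  (\prod_(i < d) side i) / 2 <= boxes_vol s.
Proof.
move=> sv sc.
have ratio_ge0 b i : b \in s -> 0 <= ratio b i.
  by move=> bs; rewrite /ratio divr_ge0 ?subr_ge0 ?sv // ltW.
pose K := \sum_(b <- s)
  (size (index_enum 'I_d))%:R * \prod_(i <- index_enum 'I_d) (ratio b i + 1).
have K0 : 0 <= K.
  rewrite /K big_seq; apply: sumr_ge0 => b bs; apply: mulr_ge0 => //.
  by apply: prodr_ge0 => i _; rewrite addr_ge0 ?ratio_ge0.
pose m := Num.Def.truncn (2 * K); have Km := truncnS_gt (2 * K); rewrite -/m in Km.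
have e01 : 0 <= (m.+1%:R : R)^-1 <= 1.
  by rewrite invr_ge0 ler0n /= invf_le1 ?ler1n // ltr0n.
have Ke : (m.+1%:R)^-1 * K <= 1 / 2.
  by rewrite mulrC ler_pdivrMr ?ltr0n // mul1r mulrC ler_pdivlMr // ltW // mulrC.
have grid_le : \sum_(b <- s) \prod_(i < d) (ratio b i + (m.+1%:R)^-1) <=
               \sum_(b <- s) \prod_(i < d) ratio b i + (m.+1%:R)^-1 * K.
  rewrite /K mulr_sumr -big_split /= big_seq [leRHS]big_seq; apply: ler_sum => b bs.
  by rewrite mulrA; apply: prod_addr_le => // i; apply: ratio_ge0.
have volE : \sum_(b <- s) \prod_(i < d) ratio b i = boxes_vol s / \prod_(i < d) side i.
  by rewrite /boxes_vol mulr_suml; apply: eq_bigr => b _; rewrite /ratio prodf_div.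
have side0 : 0 < \prod_(i < d) side i by apply: prodr_gt0 => i _.
have := le_trans (grid_count (ltn0Sn m) sv sc) grid_le; rewrite volE.
rewrite -(ler_pM2r side0) mulrDl divfK ?gt_eqF // mul1r.
have := ler_wpM2r (ltW side0) Ke.
by set e := _ * K; set vol := boxes_vol s; set P := \prod_(i < d) side i; lra.
Qed.

Lemma jordan_vol_box_gt0 : 0 < jordan_vol (box l r).
Proof.
have side0 : 0 < \prod_(i < d) side i by apply: prodr_gt0 => i _.
apply: (@lt_le_trans _ _ ((\prod_(i < d) side i) / 2)); first by rewrite divr_gt0.
apply: jordan_vol_ge; last exact: boxes_vol_box_ge.
exists [:: (l, r)]; split; first by move=> b; rewrite inE => /eqP -> i /=; apply: ltW.
by move=> y ylr; exists (l, r); rewrite //= inE.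
Qed.

End BoxContent.

Section StrictEnlargement.
Variables (R : realType) (n : nat).
Local Notation V := 'rV[R]_n.+1.
Local Notation box := (@Defs.box R n.+1).
Local Notation conv := (@Defs.conv R n.+1).

Lemma conv_seq_norm_le (s : seq V) x :
  conv [set y | y \in s] x -> `|x| <= \sum_(w <- s) `|w|.
Proof.
by apply: conv_norm_le => w ws; apply: (ler_sum_mem (F := fun w => `|w|)) => // y _.
Qed.

Lemma supp_fun_mono (K P : set V) (M : R) u : K !=set0 -> K `<=` P ->
  (forall x, P x -> `|x| <= M) -> supp_fun K u <= supp_fun P u.
Proof.
move=> [x Kx] KP PM; apply: (supp_fun_le (ex_intro _ x Kx)) => y Ky.
by apply: (supp_fun_ub (ex_intro _ x (KP _ Kx)) PM); apply: KP.
Qed.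

Lemma min_supp_sandwich (K P : set V) (M : R) u0 : K !=set0 -> K `<=` P ->
    (forall x, P x -> `|x| <= M) -> Defs.sphere u0 ->
    (forall u, Defs.sphere u -> supp_fun K u0 <= supp_fun K u) ->
    supp_fun P u0 <= supp_fun K u0 ->
  min_supp P = min_supp K.
Proof.
move=> K0 KP PM u0S u0min PK; have mono u := supp_fun_mono u K0 KP PM.
have PKu0 : supp_fun P u0 = supp_fun K u0 by apply/le_anti; rewrite PK mono.
rewrite (min_suppE u0S u0min) (@min_suppE _ _ P u0) // => u uS.
by rewrite PKu0 (le_trans (u0min u uS)) ?mono.
Qed.

(* The ball around [q = (1 - t) p + t z] is the image of a ball inside [O] under
   the homothety of centre [p] and ratio [t], hence lies in [P]; for small [t] it
   stays close to [p], hence outside [O]. *)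
Lemma exists_ball_in_diff (O P : set V) p z : Defs.convex_set P -> O `<=` P ->
    closed O -> interior O z -> P p -> ~ O p ->
  exists q, exists2 rho : R, 0 < rho &
    forall y, `|q - y| <= rho -> P y /\ ~ O y.
Proof.
move=> Pcvx OP Ocl zI Pp Op.
have p_out : interior (~` O) p by move: (closed_openC Ocl); rewrite openE; apply.
have [eps eps0 epsO] := interior_norm_ball p_out.
have [e e0 eO] := interior_norm_ball zI.
pose D := `|z - p|; have D0 : 0 <= D := normr_ge0 _.
pose t := eps / (2 * (D + eps)).
have t0 : 0 < t by rewrite divr_gt0 // mulr_gt0 // ltr_wpDl.
have t1 : t <= 1 by rewrite ler_pdivrMr ?mulr_gt0 ?ltr_wpDl // mul1r; lra.
have tD : t * D < eps / 2.
  rewrite /t mulrAC ltr_pdivrMr ?mulr_gt0 ?ltr_wpDl //.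
  have -> : eps / 2 * (2 * (D + eps)) = eps * (D + eps) by field.
  by rewrite ltr_pM2l //; lra.
pose rho := Num.min (t * e) (eps / 2) / 2.
have [m1 m2 m3] := minr_cases (t * e) (eps / 2).
have te0 : 0 < t * e by rewrite mulr_gt0.
have rho0 : 0 < rho by rewrite /rho divr_gt0 //; case: m3 => ->; lra.
have rho_te : rho < t * e by rewrite /rho; lra.
have rho_eps : rho < eps / 2 by rewrite /rho; lra.
set q := (1 - t) *: p + t *: z.
exists q, rho => // y qy; split.
  pose z' := z + t^-1 *: (y - q).
  have -> : y = (1 - t) *: p + t *: z'.
    by rewrite /z' scalerDr scalerA mulfV ?gt_eqF // scale1r addrA addrC subrK.
  apply: (Pcvx _ _ _ Pp); last by rewrite (ltW t0) t1.
  apply/OP/eO.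
  rewrite /z' opprD addrA subrr sub0r normrN normrZ gtr0_norm ?invr_gt0 //.
  by rewrite -distrC mulrC ltr_pdivrMr // (le_lt_trans qy) // mulrC.
have pq : p - q = t *: (p - z).
  by rewrite /q scalerBl scale1r scalerBr opprD opprB addrA addrCA subrr addr0.
apply: epsO; have := ler_normD (p - q) (q - y).
by rewrite addrA subrK pq normrZ gtr0_norm // (distrC p z) -/D; lra.
Qed.

Lemma exists_box_in_diff (O P : set V) p z : Defs.convex_set P -> O `<=` P ->
    closed O -> interior O z -> P p -> ~ O p ->
  exists l r : V,
    [/\ forall i, l 0 i < r 0 i, box l r `<=` P & forall y, O y -> ~ box l r y].
Proof.
move=> Pcvx OP Ocl zI Pp Op.
have [q [rho rho0 qP]] := exists_ball_in_diff Pcvx OP Ocl zI Pp Op.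
pose c := rho *: (const_mx 1 : V).
have box_ball y : box (q - c) (q + c) y -> `|q - y| <= rho.
  move=> yc; apply: normr_le_coord => [|i]; first exact: ltW.
  by have /andP[] := yc i; rewrite !mxE mulr1 => y1 y2; rewrite ler_norml; lra.
exists (q - c), (q + c); split => [i|y /box_ball /qP[] //|y Oy /box_ball /qP[] //].
by rewrite !mxE mulr1; lra.
Qed.

Lemma jordan_vol_ltr (O P : set V) (l r : V) (M : R) : O `<=` P ->
    (forall x, P x -> `|x| <= M) -> (forall i, l 0 i < r 0 i) ->
    box l r `<=` P -> (forall y, O y -> ~ box l r y) ->
  jordan_vol O < jordan_vol P.
Proof.
move=> OP PM lr lrP lrO.
have M0 : 0 <= M.
  have [x /lrP /PM] : box l r !=set0 by exists l => i; rewrite lexx ltW.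
  exact: le_trans.
have Pcov := norm_bounded_cover M0 PM.
have Ocov := norm_bounded_cover M0 (fun x Ox => PM x (OP x Ox)).
have := jordan_vol_excision (fun i => ltW (lr i)) OP lrP lrO Pcov Ocov.
by have := jordan_vol_box_gt0 lr; lra.
Qed.

End StrictEnlargement.

Lemma interior_exists_neq0 (R : realType) (n : nat) (K : set 'rV[R]_n.+1) :
  K° !=set0 -> exists2 x, K x & x != 0.
Proof.
move=> [z zI]; have [z0|z0] := eqVneq z 0; last by exists z => //; apply: nbhs_singleton.
by have [y Ky] := interior_exists_neq zI; rewrite -z0; exists y.
Qed.

Section InvariantBody.
Variables (R : realType) (n : nat) (S : set 'M[R]_n.+1).
Hypotheses (HS : subgroup_O S) (Hspan : spanning S).
Local Notation V := 'rV[R]_n.+1.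

Section SupportDirection.
Variables (K : set V) (M : R) (u : V) (os : seq V).
Hypotheses (Kinv : S_invariant S K) (KM : forall x, K x -> `|x| <= M)
  (u1 : Defs.sphere u) (osE : group_orbit S u = [set x | x \in os]).

Let in_os v : group_orbit S u v <-> v \in os. Proof. by rewrite osE. Qed.

Lemma invariant_sub_polyhedron : K !=set0 -> K `<=` polyhedron os (supp_fun K u).
Proof.
move=> K0 x Kx v /in_os [phi Sphi <-].
rewrite -[phi in act phi u]trmxK -act_dotp (supp_fun_ub K0 KM) // -(Kinv (S_tr HS Sphi)).
by exists x.
Qed.

Lemma invariant_supp_fun_gt0 x : K x -> x != 0 -> 0 < supp_fun K u.
Proof.
move=> Kx x0; have [v uv xv] := orbit_dotp_gt0 HS Hspan u1 x0.
apply: (lt_le_trans xv); apply: (invariant_sub_polyhedron (ex_intro _ x Kx)) => //.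
exact/in_os.
Qed.

End SupportDirection.

Lemma circumscribed_polytope (K : set V) : K0 S K ->
  exists2 P, [/\ polytope P, S_invariant S P, K `<=` P & Defs.convex_set P] &
    [/\ (exists M : R, forall x, P x -> `|x| <= M), min_supp P = min_supp K
      & 0 < min_supp K].
Proof.
move=> [[_ [Kcpt Kint]] [K_0 Kinv]]; have K_ne0 : K !=set0 by exists 0.
have [M _ KM] := compact_norm_bounded Kcpt.
have [u0 u0S u0min] := supp_fun_min_attained Kcpt K_ne0.
have [os [_ osE]] := orbit_finite HS Hspan u0S.
pose h := supp_fun K u0.
have h_gt0 : 0 < h.
  have [x Kx x0] := interior_exists_neq0 Kint.
  by apply: (invariant_supp_fun_gt0 Kinv KM u0S osE Kx x0).
have PE := polyhedronE HS Hspan u0S osE (ltW h_gt0).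
have KP : K `<=` polyhedron os h := invariant_sub_polyhedron Kinv KM osE K_ne0.
have PM x : polyhedron os h x -> `|x| <= \sum_(w <- vertex_seq os h) `|w|.
  by rewrite PE; apply: conv_seq_norm_le.
exists (polyhedron os h); first split => //.
- by exists (vertex_seq os h).
- exact: (polyhedron_invariant HS h osE).
- by rewrite PE; apply: conv_convex.
split; first by exists (\sum_(w <- vertex_seq os h) `|w|).
  apply: (min_supp_sandwich K_ne0 KP PM u0S u0min).
  have u0os : u0 \in os by move: (orbit_refl HS u0); rewrite osE.
  by apply: (supp_fun_le (ex_intro _ 0 (KP _ K_0))) => x /(_ u0 u0os).
by rewrite (min_suppE u0S u0min).
Qed.

End InvariantBody.

Theorem lemma4p3 (R : realType) (n : nat) (S : set 'M[R]_(n.+1))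
  (n_ge1 : (1 <= n)%N)
  (HS : subgroup_O S) (Hdisc : discrete_set S) (Hspan : spanning S)
  (Omega : set 'rV[R]_(n.+1)) (HO : K0 S Omega) (Hnp : ~ polytope Omega) :
  exists P : set 'rV[R]_(n.+1),
    polytope P /\ S_invariant S P /\ Omega `<=` P /\ F_minf Omega < F_minf P.
Proof.
have [[_ [cptO [z zI]]] _] := HO.
have [P [Ppoly Pinv OP Pcvx] [[M PM] mP supp_gt0]] := circumscribed_polytope HS Hspan HO.
have [p Pp Op] : exists2 p, P p & ~ Omega p.
  apply: contrapT => PO; apply: Hnp; suff -> : Omega = P by [].
  by apply/seteqP; split => // x Px; apply: contrapT => Ox; apply: PO; exists x.
have [l [r [lr lrP lrO]]] := exists_box_in_diff Pcvx OP
  (compact_closed (@norm_hausdorff _ _) cptO) zI Pp Op.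
exists P; do 3!split => //.
rewrite /F_minf /Vol mP ltr_pM2r ?invr_gt0 ?exprn_gt0 // ltr_pM2l ?ltr0n //.
exact: jordan_vol_ltr OP PM lr lrP lrO.
Qed.
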